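(* Let $f,g\in\mathbb{Z}[x,y]$ have no common non-constant factor, let $R^{(y)}=\operatorname{res}(f,g;y)$ and $R^{(x)}=\operatorname{res}(f,g;x)$, and let $\alpha$ and $\beta$ be arbitrary real roots of $R^{(y)}$ and $R^{(x)}$, respectively, with discs $\Delta(\alpha),\Delta(\beta)$ and bounds $L(\alpha),L(\beta)$ constructed as in the context. Then: (1) the polydisc $\Delta(\alpha,\beta):=\Delta(\alpha)\times\Delta(\beta)\subset\mathbb{C}^2$ contains at most one common complex zero of $f$ and $g$; if it contains one, then this zero is real and equals $(\alpha,\beta)$; (2) for every point $(z_1,z_2)$ on the boundary of $\Delta(\alpha,\beta)$, $|R^{(y)}(z_1)|>L(\alpha)$ if $z_1\in\partial\Delta(\alpha)$, and $|R^{(x)}(z_2)|>L(\beta)$ if $z_2\in\partial\Delta(\beta)$.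
   Context: Notation: for an interval $I=(a,b)\subset\mathbb{R}$, $m_I=(a+b)/2$, $r_I=(b-a)/2$; $\Delta_r(m)=\{z\in\mathbb{C}:|z-m|<r\}$. For $p\in\mathbb{R}[x]$ and reals $m,r,K$, $T^p_K(m,r)$ means $|p(m)|-K\sum_{k\ge1}\left|\frac{p^{(k)}(m)}{k!}\right|r^k>0$. Construction: write $R^{(y)}=\prod_{i=1}^{\deg R^{(y)}} r_i^{\,i}$ with $r_i\in\mathbb{Z}[x]$ square-free and pairwise coprime. If $\alpha$ is a root of $r_{i_0}$, let $I=I(\alpha)$ be an open real interval containing $\alpha$ such that $T^{(r_{i_0})'}_{3/2}(m_I,8r_I)$ holds and $T^{r_i}_1(m_I,8r_I)$ holds for all $i\neq i_0$; set $\Delta(\alpha):=\Delta_{2r_I}(m_I)$ and $L(\alpha):=2^{-i_0-\deg R^{(y)}}|R^{(y)}(m_I-2r_I)|$. $\Delta(\beta)$, $L(\beta)$ are constructed identically from $R^{(x)}$ and its square-free factorization. *)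

From HB Require Import structures.
From mathcomp Require Import all_boot all_order all_algebra.
From mathcomp Require Import complex.
From mathcomp Require Import reals.
Set Implicit Arguments. Unset Strict Implicit. Unset Printing Implicit Defensive.
Import Order.TTheory GRing.Theory Num.Theory.
Local Open Scope ring_scope.

(* Bivariate integer polynomials f in Z[x,y] are represented as
   f : {poly {poly int}} with OUTER variable y and INNER variable x,
   i.e. f = \sum_j c_j(x) y^j.  Hence res(f,g;y) = resultant f g (a polynomial
   in x) and res(f,g;x) = resultant (swapXY f) (swapXY g) (a polynomial in y). *)

Definition res_y (f g : {poly {poly int}}) : {poly int} := resultant f g.
Definition res_x (f g : {poly {poly int}}) : {poly int} :=
  resultant (swapXY f) (swapXY g).

Definition polyZ (K : nzRingType) (p : {poly int}) : {poly K} :=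
  map_poly (fun c : int => c%:~R) p.

Definition evZ (K : nzRingType) (p : {poly int}) (z : K) : K := (polyZ K p).[z].

(* evaluation of f in Z[x,y] at (x,y) = (z1,z2) *)
Definition evXY (K : comNzRingType) (f : {poly {poly int}}) (z1 z2 : K) : K :=
  ((map_poly (polyZ K) f).[z2%:P]).[z1].

Definition no_common_factor (f g : {poly {poly int}}) : Prop :=
  forall h q1 q2 : {poly {poly int}}, f = h * q1 -> g = h * q2 ->
    exists c : int, h = c%:P%:P.

Definition squarefreeZ (p : {poly int}) : Prop :=
  forall q s : {poly int}, p = q * q * s -> (size q <= 1)%N.

Definition coprimeZ (p q : {poly int}) : Prop :=
  forall h s t : {poly int}, p = h * s -> q = h * t -> (size h <= 1)%N.

Definition sqfree_factorization (Rp : {poly int}) (r : nat -> {poly int}) : Prop :=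
  [/\ Rp = \prod_(1 <= i < (size Rp).-1.+1) r i ^+ i,
      (forall i, (1 <= i <= (size Rp).-1)%N -> squarefreeZ (r i)) &
      (forall i j, (1 <= i <= (size Rp).-1)%N -> (1 <= j <= (size Rp).-1)%N ->
         i != j -> coprimeZ (r i) (r j))].

(* T^p_K(m,r) :  |p(m)| - K * sum_{k>=1} |p^{(k)}(m)/k!| r^k > 0
   (the sum is finite: terms with k >= size p vanish) *)
Definition Ttest (R : realType) (p : {poly int}) (K m r : R) : Prop :=
  0 < `|evZ p m| -
      K * \sum_(1 <= k < size p) `|(polyZ R p)^`(k).[m] / (k`!)%:R| * r ^+ k.

Definition admissible_interval (R : realType) (Rp : {poly int})
    (r : nat -> {poly int}) (i0 : nat) (alpha a b : R) : Prop :=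
  let mI := (a + b) / 2 in
  let rI := (b - a) / 2 in
  [/\ a < alpha < b,
      Ttest (r i0)^`() (3 / 2) mI (8 * rI) &
      forall i, (1 <= i <= (size Rp).-1)%N -> i != i0 ->
        Ttest (r i) 1 mI (8 * rI)].

Definition Lbound (R : realType) (Rp : {poly int}) (i0 : nat) (a b : R) : R :=
  (2 ^+ (i0 + (size Rp).-1))^-1 * `|evZ Rp ((a + b) / 2 - 2 * ((b - a) / 2))|.

From HB Require Import structures.
From mathcomp Require Import all_boot all_order all_algebra.
From mathcomp Require Import complex.
From mathcomp Require Import reals.
From mathcomp Require Import lra zify.
From mathcomp Require polyorder.
Set Implicit Arguments. Unset Strict Implicit. Unset Printing Implicit Defensive.
Import Order.TTheory GRing.Theory Num.Theory.
Local Open Scope ring_scope.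
Local Open Scope complex_scope.

(* Write each factor r_i of R = \prod_i r_i^i as a Taylor series around the
   centre m of the interval.  On the closed disc |z - m| <= 2 r_I the test
   T^{r_i}_1(m, 8 r_I) keeps r_i(z) within a quarter of |r_i(m)| of r_i(m), so
   r_i has no zero there and |r_i(z0)| < 2 |r_i(z)| for any two points of the
   disc.  For the factor r_{i0} vanishing at alpha, write
   r_{i0}(w) - r_{i0}(t) = (w - t) Q(t, w); the test T^{r_{i0}'}_{3/2}(m, 8 r_I)
   keeps Q(t, w) within an eighth of |r_{i0}'(m)| of r_{i0}'(m) when
   |t - m| <= r_I and |w - m| <= 2 r_I.  Hence alpha is the only zero of r_{i0}
   in the disc, and |r_{i0}(m - 2 r_I)| < 4 |r_{i0}(z)| on its boundary.
   Multiplying over the factorization gives |R(m - 2 r_I)| < 2^(i0 + deg R) |R(z)|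
   on the boundary, which is the bound L(alpha).  Finally the resultant lies in
   the ideal generated by f and g, so a common zero (z1, z2) of f and g is a zero
   of R^(y) at z1 and of R^(x) at z2. *)

Section ComplexModulus.
Variable R : rcfType.
Implicit Types x y z : R[i].

(* [Normc.normc] retyped into [R]: the library states its codomain as a
   structure join on which [lra] fails. *)
Definition modc z : R := Normc.normc z.

Lemma normcE z : `|z| = (modc z)%:C.
Proof. by case: z => a b; rewrite normc_def. Qed.

Lemma modc_ge0 z : 0 <= modc z.
Proof. by case: z => a b; apply: sqrtr_ge0. Qed.

Lemma modc0 : modc 0 = 0. Proof. exact: Normc.normc0. Qed.
Lemma modc1 : modc 1 = 1. Proof. exact: Normc.normc1. Qed.
Lemma modcM x y : modc (x * y) = modc x * modc y. Proof. exact: Normc.normcM. Qed.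
Lemma modcN x : modc (- x) = modc x. Proof. exact: normcN. Qed.
Lemma modcD x y : modc (x + y) <= modc x + modc y. Proof. exact: le_normcD. Qed.

Lemma modc_real (r : R) : modc r%:C = `|r|.
Proof. by rewrite /modc /= expr0n /= addr0 sqrtr_sqr. Qed.

Lemma modcX z n : modc (z ^+ n) = modc z ^+ n.
Proof.
elim: n => [|n IHn]; first by rewrite !expr0 modc1.
by rewrite !exprS modcM IHn.
Qed.

Lemma ler_modc_sum (I : Type) (s : seq I) (F : I -> R[i]) :
  modc (\sum_(i <- s) F i) <= \sum_(i <- s) modc (F i).
Proof.
elim: s => [|i s IHs]; first by rewrite !big_nil modc0.
by rewrite !big_cons; apply: le_trans (modcD _ _) _; apply: lerD.
Qed.

Lemma modc_prod (I : Type) (s : seq I) (F : I -> R[i]) :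
  modc (\prod_(i <- s) F i) = \prod_(i <- s) modc (F i).
Proof.
elim: s => [|i s IHs]; first by rewrite !big_nil modc1.
by rewrite !big_cons modcM IHs.
Qed.

Lemma modc_near_real (a : R) x :
  `|a| - modc (x - a%:C) <= modc x <= `|a| + modc (x - a%:C).
Proof.
rewrite -modc_real lerBlDr; apply/andP; split.
  by have := modcD x (a%:C - x); rewrite addrC subrK -opprB modcN.
by have := modcD a%:C (x - a%:C); rewrite addrC subrK.
Qed.

End ComplexModulus.
Arguments modc {R}.
Arguments modc_ge0 {R}.
Arguments modc0 {R}.
Arguments modcM {R}.
Arguments modcN {R}.
Arguments modcD {R}.
Arguments modc_real {R}.
Arguments modcX {R}.

Section ResultantCommonRoot.
Variable A : comNzRingType.
Implicit Types p q : {poly A}.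

Lemma resultantCl (a : A) q : resultant a%:P q = a ^+ (size q).-1.
Proof.
have dp0 : (size a%:P).-1 = 0%N by rewrite size_polyC; case: (a != 0).
rewrite /resultant.
have -> : Sylvester_mx a%:P q = a%:M.
  apply/matrixP => i j; rewrite Sylvester_mxE !mxE.
  case: splitP => k Hk; last by case: k {Hk} => k kp; exfalso; move: kp; rewrite dp0.
  rewrite -(inj_eq val_inj) /= Hk coefC.
  by have [jk|jk|->] := ltngtP j k; rewrite ?subnn // subn_eq0 leqNgt jk.
by rewrite det_scalar dp0 addn0.
Qed.

Lemma resultantCr p (b : A) : resultant p b%:P = b ^+ (size p).-1.
Proof.
have dq0 : (size b%:P).-1 = 0%N by rewrite size_polyC; case: (b != 0).
rewrite /resultant.
have -> : Sylvester_mx p b%:P = b%:M.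
  apply/matrixP => i j; rewrite Sylvester_mxE !mxE.
  case: splitP => k Hk; first by case: k {Hk} => k kp; exfalso; move: kp; rewrite dq0.
  rewrite -(inj_eq val_inj) /= Hk (_ : _ + k = k)%N ?dq0 // coefC.
  by have [jk|jk|->] := ltngtP j k; rewrite ?subnn // subn_eq0 leqNgt jk.
by rewrite det_scalar dq0.
Qed.

(* The second alternative is two constant polynomials, whose Sylvester matrix
   is empty. *)
Lemma resultant_common_root (K : comNzRingType) (h : {rmorphism A -> K}) p q (x : K) :
  (map_poly h p).[x] = 0 -> (map_poly h q).[x] = 0 ->
  h (resultant p q) = 0 \/ resultant p q = 1.
Proof.
move=> hp hq.
have [/size1_polyC Dp|p_nc] := leqP (size p) 1.
  move: hp; rewrite Dp resultantCl map_polyC hornerC => hp0.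
  by case: (size q).-1 => [|n]; [right | left; rewrite rmorphXn /= hp0 expr0n].
have [/size1_polyC Dq|q_nc] := leqP (size q) 1.
  move: hq; rewrite Dq resultantCr map_polyC hornerC => hq0.
  by case: (size p).-1 => [|n]; [right | left; rewrite rmorphXn /= hq0 expr0n].
left; have [[u v] /= _ Eres] := resultant_in_ideal p_nc q_nc.
have := congr1 (fun s => (map_poly h s).[x]) Eres => /=.
by rewrite map_polyC hornerC rmorphD !rmorphM /= hornerD !hornerM hp hq !mulr0 addr0.
Qed.

End ResultantCommonRoot.

Section CommonZeros.
Variable K : comNzRingType.
Implicit Types f g : {poly {poly int}}.

Lemma evXY_horner f (z1 z2 : K) :
  evXY f z1 z2 = (map_poly (horner_eval z1 \o polyZ K) f).[z2].
Proof.
rewrite /evXY [in RHS]map_poly_comp.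
by rewrite -[z2 in RHS](hornerC z2 z1) -/(horner_eval z1 z2%:P) horner_map.
Qed.

Lemma evXY_swapXY f (z1 z2 : K) : evXY (swapXY f) z2 z1 = evXY f z1 z2.
Proof. by rewrite /evXY /polyZ -swapXY_map horner2_swapXY. Qed.

Lemma res_y_common_zero f g (z1 z2 : K) :
  evXY f z1 z2 = 0 -> evXY g z1 z2 = 0 ->
  evZ (res_y f g) z1 = 0 \/ res_y f g = 1.
Proof. by rewrite !evXY_horner; apply: resultant_common_root. Qed.

Lemma res_x_common_zero f g (z1 z2 : K) :
  evXY f z1 z2 = 0 -> evXY g z1 z2 = 0 ->
  evZ (res_x f g) z2 = 0 \/ res_x f g = 1.
Proof. by rewrite -(evXY_swapXY f) -(evXY_swapXY g); apply: res_y_common_zero. Qed.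

End CommonZeros.

Lemma sum_expn2_le k (k_ge2 : (2 <= k)%N) :
  (16 * \sum_(i < k) 2 ^ i <= 3 * k * 8 ^ k.-1)%N.
Proof.
have sum_expn2 j : ((\sum_(i < j) 2 ^ i).+1 = 2 ^ j)%N.
  by elim: j => [|j IHj]; rewrite ?big_ord0 // big_ord_recr /= -addSn IHj expnS; lia.
have shifted j : (16 * (2 ^ (j + 2) - 1) <= 3 * (j + 2) * 8 ^ (j + 1))%N.
  elim: j => [//|j IHj]; rewrite !addSn !expnS.
  have : (1 <= 2 ^ (j + 2))%N by rewrite expn_gt0.
  have : (1 <= 8 ^ (j + 1))%N by rewrite expn_gt0.
  nia.
have := shifted (k - 2)%N; rewrite subnK // (_ : k - 2 + 1 = k.-1)%N; last lia.
have := sum_expn2 k; lia.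
Qed.

Section HomogeneousSum.
Variable R : rcfType.
Local Notation C := R[i].

Definition hsum (k : nat) (x y : C) := \sum_(i < k) x ^+ (k.-1 - i) * y ^+ i.

Lemma modc_hsum_le k x y (r1 r2 : R) : modc x <= r1 -> modc y <= r2 ->
  modc (hsum k x y) <= \sum_(i < k) r1 ^+ (k.-1 - i) * r2 ^+ i.
Proof.
move=> xr1 yr2; have r1_ge0 := le_trans (modc_ge0 x) xr1.
have r2_ge0 := le_trans (modc_ge0 y) yr2.
apply: le_trans; first exact: ler_modc_sum.
apply: ler_sum => i _; rewrite modcM !modcX.
by apply: ler_pM; rewrite ?exprn_ge0 ?modc_ge0 //; apply: lerXn2r;
  rewrite ?nnegrE ?modc_ge0.
Qed.

(* Sharp at [k = 2]; since [3/16 = (1/8) / (3/2)], the test T^{p'}_{3/2} then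
   keeps the divided difference within an eighth of [p'(m)]. *)
Lemma hsum_geometric_le k (r : R) : (2 <= k)%N -> 0 <= r ->
  \sum_(i < k) r ^+ (k.-1 - i) * (2 * r) ^+ i <= 3 / 16 * k%:R * (8 * r) ^+ k.-1.
Proof.
move=> k_ge2 r_ge0.
have -> : \sum_(i < k) r ^+ (k.-1 - i) * (2 * r) ^+ i =
          (\sum_(i < k) 2 ^ i)%N%:R * r ^+ k.-1.
  rewrite natr_sum mulr_suml; apply: eq_bigr => -[i /= ik] _.
  by rewrite exprMn mulrCA -exprD subnK ?natrX //; case: k k_ge2 ik.
rewrite exprMn mulrA; apply: ler_wpM2r; first exact: exprn_ge0.
have := sum_expn2_le k_ge2; rewrite -(ler_nat R) !natrM natrX; lra.
Qed.

End HomogeneousSum.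

Section CoefficientSeries.
Variable R : rcfType.
Local Notation C := R[i].
Variables (c : nat -> R) (n : nat).

Definition cseries (w : C) := \sum_(k < n) (c k)%:C * w ^+ k.
Definition ddiff (x y : C) := \sum_(k < n) (c k)%:C * hsum k x y.

Lemma cseries_subE w t : cseries w - cseries t = (w - t) * ddiff t w.
Proof.
rewrite /cseries /ddiff -sumrB mulr_sumr; apply: eq_bigr => k _.
by rewrite -mulrBr -[w ^+ k - t ^+ k]opprB subrXX -mulNr opprB mulrCA.
Qed.

Lemma cseries_sub_c0 w : (0 < n)%N ->
  cseries w - (c 0)%:C = \sum_(1 <= k < n) (c k)%:C * w ^+ k.
Proof.
move=> n_gt0; rewrite /cseries -(big_mkord xpredT (fun k => (c k)%:C * w ^+ k)).
by rewrite big_ltn // expr0 mulr1 addrC addKr.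
Qed.

Lemma ddiff_sub_c1 x y : (1 < n)%N ->
  ddiff x y - (c 1)%:C = \sum_(2 <= k < n) (c k)%:C * hsum k x y.
Proof.
move=> n_gt1; rewrite /ddiff -(big_mkord xpredT (fun k => (c k)%:C * hsum k x y)).
rewrite big_ltn ?(ltn_trans _ n_gt1) // big_ltn //.
by rewrite /hsum big_ord0 big_ord1 subn0 !expr0 !mulr1 mulr0 add0r addrC addKr.
Qed.

(* The tests T^p_1 and T^{p'}_{3/2} of the paper, in terms of the Taylor
   coefficients [c] of [p]. *)
Definition const_dominant (r : R) : Prop :=
  0 < `|c 0| - \sum_(1 <= k < n) `|c k| * r ^+ k.
Definition linear_dominant (r : R) : Prop :=
  0 < `|c 1| - 3 / 2 * \sum_(1 <= k < n.-1) `|(k.+1)%:R * c k.+1| * r ^+ k.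

Lemma modc_cseries_sub_c0_le (r : R) w : (0 < n)%N -> 0 <= r -> modc w <= 2 * r ->
  modc (cseries w - (c 0)%:C) <= 1 / 4 * \sum_(1 <= k < n) `|c k| * (8 * r) ^+ k.
Proof.
move=> n_gt0 r_ge0 wr; rewrite cseries_sub_c0 // mulr_sumr.
apply: le_trans; first exact: ler_modc_sum.
rewrite big_nat [X in _ <= X]big_nat.
apply: ler_sum => k /andP[k_ge1 _]; rewrite modcM modcX modc_real mulrCA.
apply: ler_wpM2l; first exact: normr_ge0.
have -> : (8 * r) ^+ k = 4 ^+ k * (2 * r) ^+ k by rewrite -exprMn; congr (_ ^+ _); lra.
apply: le_trans (_ : (2 * r) ^+ k <= _).
  by apply: lerXn2r; rewrite ?nnegrE ?modc_ge0 //; lra.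
rewrite mulrA; apply: ler_peMl; first by rewrite exprn_ge0 //; lra.
have : 4 <= (4 : R) ^+ k.
  by case: k k_ge1 => // k _; rewrite exprS ler_peMr ?exprn_ege1 //; lra.
lra.
Qed.

Lemma cseries_ratio_lt2 (r : R) w w0 : (0 < n)%N -> 0 <= r ->
  const_dominant (8 * r) ->
  modc w <= 2 * r -> modc w0 <= 2 * r ->
  0 < modc (cseries w0) /\ modc (cseries w0) < 2 * modc (cseries w).
Proof.
move=> n_gt0 r_ge0; rewrite /const_dominant => c0_dom wr w0r.
have e := modc_cseries_sub_c0_le n_gt0 r_ge0 wr.
have e0 := modc_cseries_sub_c0_le n_gt0 r_ge0 w0r.
have /andP[t1 _] := modc_near_real (c 0) (cseries w).
have /andP[t2 t0] := modc_near_real (c 0) (cseries w0).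
have : 0 <= \sum_(1 <= k < n) `|c k| * (8 * r) ^+ k.
  by apply: sumr_ge0 => k _; rewrite mulr_ge0 ?exprn_ge0 //; lra.
split; lra.
Qed.

Lemma modc_ddiff_sub_c1_lt (r t : R) w : (1 < n)%N -> 0 <= r ->
  linear_dominant (8 * r) -> `|t| <= r -> modc w <= 2 * r ->
  modc (ddiff t%:C w - (c 1)%:C) < `|c 1| / 8.
Proof.
move=> n_gt1 r_ge0 c1_dom tr wr; rewrite ddiff_sub_c1 //.
pose S := \sum_(1 <= k < n.-1) `|(k.+1)%:R * c k.+1| * (8 * r) ^+ k.
apply: (@le_lt_trans _ _ (3 / 16 * S)); last first.
  by move: c1_dom; rewrite /linear_dominant -/S; lra.
have sumE :
  \sum_(2 <= k < n) `|c k| * (3 / 16 * k%:R * (8 * r) ^+ k.-1) = 3 / 16 * S.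
  rewrite /S mulr_sumr -{1}[2%N]/(1 + 1)%N big_addn subn1.
  apply: eq_bigr => k _; rewrite addn1 normrM normr_nat /=.
  by rewrite mulrCA !mulrA [_ * `|c _|]mulrC.
rewrite -sumE; apply: le_trans; first exact: ler_modc_sum.
rewrite big_nat [X in _ <= X]big_nat; apply: ler_sum => k /andP[k_ge2 _].
rewrite modcM modc_real; apply: ler_wpM2l; first exact: normr_ge0.
apply: le_trans (hsum_geometric_le k_ge2 r_ge0).
by apply: modc_hsum_le; rewrite ?modc_real.
Qed.

Lemma modc_ddiff_near_c1 (r t : R) w : (1 < n)%N -> 0 <= r ->
  linear_dominant (8 * r) -> `|t| <= r -> modc w <= 2 * r ->
  7 / 8 * `|c 1| < modc (ddiff t%:C w) < 9 / 8 * `|c 1|.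
Proof.
move=> n_gt1 r_ge0 c1_dom tr wr.
have := modc_ddiff_sub_c1_lt n_gt1 r_ge0 c1_dom tr wr.
have /andP[] := modc_near_real (c 1) (ddiff t%:C w).
by move=> *; apply/andP; split; lra.
Qed.

Lemma cseries_eq_near_root (r t : R) w : (1 < n)%N -> 0 <= r ->
  linear_dominant (8 * r) -> `|t| <= r -> modc w <= 2 * r ->
  cseries w = cseries t%:C -> w = t%:C.
Proof.
move=> n_gt1 r_ge0 c1_dom tr wr Pwt.
have /andP[Q_gt _] := modc_ddiff_near_c1 n_gt1 r_ge0 c1_dom tr wr.
have : (w - t%:C) * ddiff t%:C w = 0 by rewrite -cseries_subE Pwt subrr.
move/eqP; rewrite mulf_eq0 => /orP[/eqP/subr0_eq //|/eqP Q0].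
by exfalso; move: Q_gt; rewrite Q0 modc0; have := normr_ge0 (c 1); lra.
Qed.

(* From [7/8 |c 1| < |Q| < 9/8 |c 1|]; the factor 4 absorbs
   [9 (2 r + t) < 28 (2 r - |t|)]. *)
Lemma cseries_boundary_ratio (r t : R) w : (1 < n)%N -> linear_dominant (8 * r) ->
  `|t| < r -> modc w = 2 * r -> cseries t%:C = 0 ->
  modc (cseries (- (2 * r)%:C)) < 4 * modc (cseries w).
Proof.
move=> n_gt1 c1_dom tr wr Pt0.
have r_ge0 : 0 <= r by apply: le_trans (ltW tr); apply: normr_ge0.
have tr' := ltW tr.
have wr' : modc w <= 2 * r by rewrite wr.
have w0r : modc (- (2 * r)%:C) <= 2 * r by rewrite modcN modc_real ger0_norm //; lra.
have /andP[Qw Qw_up] := modc_ddiff_near_c1 n_gt1 r_ge0 c1_dom tr' wr'.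
have c1_gt0 : 0 < `|c 1| by lra.
have /andP[_ Qw0] := modc_ddiff_near_c1 n_gt1 r_ge0 c1_dom tr' w0r.
have factor x : cseries x = (x - t%:C) * ddiff t%:C x by rewrite -cseries_subE Pt0 subr0.
rewrite !factor !modcM.
have t_bounds : - `|t| <= t <= `|t| by rewrite -ler_norml.
have dw : 2 * r - `|t| <= modc (w - t%:C).
  by have := modcD (w - t%:C) t%:C; rewrite subrK modc_real wr; lra.
have -> : modc (- (2 * r)%:C - t%:C) = 2 * r + t.
  by rewrite -opprD -rmorphD modcN modc_real ger0_norm //; lra.
apply: (@le_lt_trans _ _ ((2 * r + t) * (9 / 8 * `|c 1|))).
  by apply: ler_wpM2l; [lra | apply: ltW].
apply: (@lt_le_trans _ _ (4 * ((2 * r - `|t|) * (7 / 8 * `|c 1|)))).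
  have margin : 0 < 38 * r - 9 * t - 28 * `|t| by lra.
  by have := mulr_gt0 c1_gt0 margin; lra.
by rewrite ler_pM2l // ler_pM //; lra.
Qed.

End CoefficientSeries.
Arguments cseries {R}.
Arguments ddiff {R}.
Arguments const_dominant {R}.
Arguments linear_dominant {R}.

Section IntPolyEval.
Implicit Types p q : {poly int}.

Lemma size_polyZ (K : numDomainType) p : size (polyZ K p) = size p.
Proof. by rewrite /polyZ size_map_inj_poly //; exact: intr_inj. Qed.

Lemma polyZ_deriv (K : nzRingType) p : polyZ K p^`() = (polyZ K p)^`().
Proof. by rewrite /polyZ deriv_map. Qed.

Lemma evZ0 (K : nzRingType) (z : K) : evZ 0 z = 0.
Proof. by rewrite /evZ /polyZ map_poly0 horner0. Qed.

Lemma evZ1 (K : comNzRingType) (z : K) : evZ 1 z = 1.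
Proof. by rewrite /evZ /polyZ rmorph1 hornerC. Qed.

Lemma evZM (K : comNzRingType) p q (z : K) : evZ (p * q) z = evZ p z * evZ q z.
Proof. by rewrite /evZ /polyZ rmorphM hornerM. Qed.

Lemma evZX (K : comNzRingType) p n (z : K) : evZ (p ^+ n) z = evZ p z ^+ n.
Proof. by rewrite /evZ /polyZ rmorphXn horner_exp. Qed.

Lemma evZ_prod (K : comNzRingType) (s : seq nat) (F : nat -> {poly int}) (z : K) :
  evZ (\prod_(i <- s) F i) z = \prod_(i <- s) evZ (F i) z.
Proof.
elim: s => [|i s IHs]; first by rewrite !big_nil evZ1.
by rewrite !big_cons evZM IHs.
Qed.

Lemma evZ_const (K : nzRingType) p (z z' : K) : (size p <= 1)%N -> evZ p z = evZ p z'.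
Proof. by move=> /size1_polyC ->; rewrite /evZ /polyZ map_polyC !hornerC. Qed.

End IntPolyEval.

Section TaylorCoefficients.
Variable R : rcfType.
Local Notation C := R[i].
Implicit Types p : {poly int}.

Definition tcoef p (m : R) (k : nat) : R := (polyZ R p)^`(k).[m] / (k`!)%:R.

Lemma tcoefE p m k : tcoef p m k = (polyZ R p)^`N(k).[m].
Proof.
by rewrite /tcoef nderivn_def hornerMn -mulr_natr mulfK // pnatr_eq0 -lt0n fact_gt0.
Qed.

Lemma tcoef0 p m : tcoef p m 0 = evZ p m.
Proof. by rewrite /tcoef /evZ derivn0 fact0 divr1. Qed.

Lemma tcoef_deriv p m k : tcoef p^`() m k = (k.+1)%:R * tcoef p m k.+1.
Proof.
by rewrite /tcoef polyZ_deriv -derivSn factS natrM invfM [RHS]mulrCA mulVKf ?pnatr_eq0.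
Qed.

Lemma polyZ_complex p : polyZ C p = map_poly (real_complex R) (polyZ R p).
Proof.
rewrite /polyZ -map_poly_comp; apply: eq_map_poly => a /=.
by rewrite rmorph_int.
Qed.

Lemma evZ_real p (x : R) : evZ p x%:C = (evZ p x)%:C.
Proof. by rewrite /evZ polyZ_complex horner_map. Qed.

Lemma evZ_taylor p m (z : C) : evZ p z = cseries (tcoef p m) (size p) (z - m%:C).
Proof.
rewrite -{1}(subrK m%:C z) addrC /evZ.
rewrite (@nderiv_taylor_wide _ (size p)) ?size_polyZ //; last exact: mulrC.
apply: eq_bigr => k _.
by rewrite tcoefE polyZ_complex nderivn_map horner_map.
Qed.

End TaylorCoefficients.

Section TaylorTests.
Variable R : realType.
Local Notation C := R[i].
Implicit Types (p : {poly int}) (m r K : R).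

Lemma Ttest_size p K m r : Ttest p K m r -> (0 < size p)%N.
Proof.
rewrite lt0n size_poly_eq0; apply: contraTN => /eqP ->.
by rewrite /Ttest size_poly0 big_geq // mulr0 subr0 evZ0 normr0 ltxx.
Qed.

Lemma Ttest_deriv_size p K m r : Ttest p^`() K m r -> (1 < size p)%N.
Proof. by move/Ttest_size; rewrite polyorder.size_deriv; case: size. Qed.

Lemma Ttest_const_dominant p m r : Ttest p 1 m r -> const_dominant (tcoef p m) (size p) r.
Proof. by rewrite /Ttest /const_dominant mul1r tcoef0. Qed.

Lemma Ttest_deriv_linear_dominant p m r :
  Ttest p^`() (3 / 2) m r -> linear_dominant (tcoef p m) (size p) r.
Proof.
rewrite /Ttest /linear_dominant polyorder.size_deriv -tcoef0 tcoef_deriv mul1r.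
by congr (_ < _ - _ * _); apply: eq_bigr => k _; rewrite -tcoef_deriv.
Qed.

Lemma Ttest_ratio_lt2 p m r (z z0 : C) : 0 <= r -> Ttest p 1 m (8 * r) ->
  modc (z - m%:C) <= 2 * r -> modc (z0 - m%:C) <= 2 * r ->
  0 < modc (evZ p z0) /\ modc (evZ p z0) < 2 * modc (evZ p z).
Proof.
move=> r_ge0 T1 zr z0r; rewrite !(evZ_taylor p m).
apply: cseries_ratio_lt2 zr z0r => //; last exact: Ttest_const_dominant.
by apply: Ttest_size T1.
Qed.

Section DerivativeTest.
Variables (p : {poly int}) (m r alpha : R).
Hypotheses (alpha_near : `|alpha - m| < r) (p_alpha : evZ p alpha = 0).
Hypothesis T2 : Ttest p^`() (3 / 2) m (8 * r).

Let r_ge0 : 0 <= r. Proof. exact: le_trans (normr_ge0 _) (ltW alpha_near). Qed.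
Let size_p_gt1 : (1 < size p)%N := Ttest_deriv_size T2.
Let c1_dom := Ttest_deriv_linear_dominant T2.
Let P_alpha : cseries (tcoef p m) (size p) (alpha - m)%:C = 0.
Proof. by rewrite rmorphB -evZ_taylor evZ_real p_alpha. Qed.

Lemma Ttest_deriv_root_unique (z : C) :
  modc (z - m%:C) <= 2 * r -> evZ p z = 0 -> z = alpha%:C.
Proof.
move=> zr pz0; have : z - m%:C = (alpha - m)%:C.
  apply: (cseries_eq_near_root size_p_gt1 r_ge0 c1_dom (ltW alpha_near) zr).
  by rewrite P_alpha -evZ_taylor.
by move/eqP; rewrite rmorphB subr_eq subrK => /eqP.
Qed.

Lemma Ttest_deriv_boundary_ratio (z : C) : modc (z - m%:C) = 2 * r ->
  modc (evZ p (m - 2 * r)%:C) < 4 * modc (evZ p z).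
Proof.
move=> zr; rewrite !(evZ_taylor p m) rmorphB addrC addKr.
exact: cseries_boundary_ratio size_p_gt1 c1_dom alpha_near zr P_alpha.
Qed.

End DerivativeTest.

End TaylorTests.

Lemma size_prod_exp_pred (R : idomainType) (s : seq nat) (F : nat -> {poly R}) :
  (forall i, i \in s -> F i != 0) ->
  (size (\prod_(i <- s) F i ^+ i)).-1 = (\sum_(i <- s) i * (size (F i)).-1)%N.
Proof.
elim: s => [|j s IHs] F_nz; first by rewrite !big_nil size_poly1.
have F_nz' i : i \in s -> F i != 0 by move=> i_s; rewrite F_nz // in_cons i_s orbT.
have Fj_nz : F j ^+ j != 0 by rewrite expf_neq0 // F_nz ?mem_head.
have Fs_nz : \prod_(i <- s) F i ^+ i != 0.
  by rewrite prodf_seq_neq0; apply/allP => i i_s; rewrite expf_neq0 ?F_nz'.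
rewrite !big_cons size_mul // -IHs // mulnC -size_exp.
move: Fj_nz Fs_nz; rewrite -!size_poly_gt0.
by case: (size (F j ^+ j)) => // a _; case: size => // b _; rewrite /= addnS.
Qed.

Lemma ltr_prod_seq1 (R : numDomainType) (I : eqType) (s : seq I) i0 (E1 E2 : I -> R) :
  i0 \in s -> uniq s -> (forall i, i \in s -> i != i0 -> 0 < E1 i <= E2 i) ->
  0 <= E1 i0 < E2 i0 -> \prod_(i <- s) E1 i < \prod_(i <- s) E2 i.
Proof.
move=> i0_s s_uniq E12 /andP[E1i0_ge0 E12i0].
rewrite (bigD1_seq i0) //= [X in _ < X](bigD1_seq i0) //=.
have P1_gt0 : 0 < \prod_(i <- s | i != i0) E1 i.
  by rewrite big_seq_cond prodr_gt0 // => i /andP[i_s /(E12 i i_s)/andP[]].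
have P12 : \prod_(i <- s | i != i0) E1 i <= \prod_(i <- s | i != i0) E2 i.
  rewrite big_seq_cond [X in _ <= X]big_seq_cond; apply: ler_prod => i /andP[i_s ne].
  by have /andP[/ltW -> ->] := E12 i i_s ne.
apply: lt_le_trans (_ : E2 i0 * \prod_(i <- s | i != i0) E1 i <= _).
  by rewrite ltr_pM2r.
by rewrite ler_wpM2l // (le_trans E1i0_ge0 (ltW E12i0)).
Qed.

Section SquareFreeFactorization.
Variables (R : realType) (Rp : {poly int}) (r : nat -> {poly int}) (i0 : nat).
Variables (alpha a b : R).
Hypotheses (Rp_fact : sqfree_factorization Rp r) (i0_range : (1 <= i0 <= (size Rp).-1)%N).
Hypotheses (r_alpha : evZ (r i0) alpha = 0) (adm : admissible_interval Rp r i0 alpha a b).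

Local Notation mI := ((a + b) / 2).
Local Notation rI := ((b - a) / 2).
Local Notation s := (index_iota 1 (size Rp).-1.+1).

Let Rp_prod : Rp = \prod_(i <- s) r i ^+ i. Proof. by case: Rp_fact. Qed.
Let i0_s : i0 \in s. Proof. by rewrite mem_index_iota ltnS. Qed.
Let alpha_near : `|alpha - mI| < rI.
Proof. by case: adm => /andP[? ?] _ _; rewrite ltr_norml; lra. Qed.
Let rI_ge0 : 0 <= rI. Proof. exact: le_trans (normr_ge0 _) (ltW alpha_near). Qed.
Let T_deriv : Ttest (r i0)^`() (3 / 2) mI (8 * rI). Proof. by case: adm. Qed.
Let T_other i : i \in s -> i != i0 -> Ttest (r i) 1 mI (8 * rI).
Proof. by case: adm => _ _ T; rewrite mem_index_iota ltnS; apply: T. Qed.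

Let r_neq0 i : i \in s -> r i != 0.
Proof.
move=> i_s; have i_gt0 : (0 < i)%N by move: i_s; rewrite mem_index_iota => /andP[].
apply: contraTneq i0_range => ri0.
have -> : Rp = 0.
  by rewrite Rp_prod (bigD1_seq i) ?iota_uniq //= ri0 -(prednK i_gt0) exprS !mul0r.
by rewrite size_poly0; lia.
Qed.

Let size_Rp : ((size Rp).-1 = \sum_(i <- s) i * (size (r i)).-1)%N.
Proof. by rewrite [in LHS]Rp_prod (size_prod_exp_pred r_neq0). Qed.

Let evZ_Rp (z : R[i]) : evZ Rp z = \prod_(i <- s) evZ (r i ^+ i) z.
Proof. by rewrite [in LHS]Rp_prod evZ_prod. Qed.

Lemma sqfree_factorization_root_unique (z : R[i]) :
  modc (z - mI%:C) < 2 * rI -> evZ Rp z = 0 -> z = alpha%:C.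
Proof.
move=> zr; rewrite evZ_Rp => /eqP; rewrite prodf_seq_eq0.
case/hasP => i i_s /=; rewrite evZX expf_eq0 => /andP[_ /eqP ri_z].
have [i_eq | ne] := eqVneq i i0.
  rewrite i_eq in ri_z.
  exact: Ttest_deriv_root_unique alpha_near r_alpha T_deriv _ (ltW zr) ri_z.
have [] := Ttest_ratio_lt2 rI_ge0 (T_other i_s ne) (ltW zr) (ltW zr).
by rewrite ri_z modc0 ltxx.
Qed.

Local Notation z0 := (mI - 2 * rI)%:C.

Let z0_near : modc (z0 - mI%:C) <= 2 * rI.
Proof.
by rewrite rmorphB addrC addKr modcN modc_real ger0_norm // mulr_ge0.
Qed.

Lemma factor_boundary_ratio i (z : R[i]) : i \in s -> i != i0 ->
  modc (z - mI%:C) = 2 * rI ->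
  0 < modc (evZ (r i ^+ i) z0) <= 2 ^+ (i * (size (r i)).-1) * modc (evZ (r i ^+ i) z).
Proof.
move=> i_s ne zr; rewrite !evZX !modcX.
have zr' : modc (z - mI%:C) <= 2 * rI by rewrite zr.
have [r_z0_gt0 ratio] := Ttest_ratio_lt2 rI_ge0 (T_other i_s ne) zr' z0_near.
rewrite exprn_gt0 //=.
have [size_le1 | size_gt1] := leqP (size (r i)) 1.
  have -> : (size (r i)).-1 = 0%N by lia.
  by rewrite (evZ_const z0 z size_le1) muln0 expr0 mul1r.
apply: le_trans (_ : (2 * modc (evZ (r i) z)) ^+ i <= _).
  by apply: lerXn2r; rewrite ?nnegrE ?mulr_ge0 ?modc_ge0 // ltW.
rewrite exprMn ler_wpM2r ?exprn_ge0 ?modc_ge0 // ler_eXn2l //; last lra.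
by rewrite leq_pmulr // -ltnS prednK // ltnW.
Qed.

Lemma factor_i0_boundary_ratio (z : R[i]) : modc (z - mI%:C) = 2 * rI ->
  0 <= modc (evZ (r i0 ^+ i0) z0) <
       2 ^+ (i0 * (size (r i0)).-1 + i0) * modc (evZ (r i0 ^+ i0) z).
Proof.
move=> zr; rewrite !evZX !modcX exprn_ge0 ?modc_ge0 //=.
have ratio := Ttest_deriv_boundary_ratio alpha_near r_alpha T_deriv zr.
have i0_gt0 : (0 < i0)%N by case/andP: i0_range.
apply: lt_le_trans (_ : (4 * modc (evZ (r i0) z)) ^+ i0 <= _).
  by rewrite ltrXn2r ?modc_ge0 // -lt0n.
rewrite exprMn ler_wpM2r ?exprn_ge0 ?modc_ge0 //.
rewrite (_ : 4 = 2 ^+ 2); last by rewrite expr2; lra.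
rewrite -exprM ler_eXn2l ?ltr1n //.
have := Ttest_deriv_size T_deriv.
by case: (size (r i0)) => // -[|d] // _; rewrite mulnS /=; lia.
Qed.

Lemma sqfree_factorization_boundary_bound (z : R[i]) :
  modc (z - mI%:C) = 2 * rI -> Lbound Rp i0 a b < modc (evZ Rp z).
Proof.
move=> zr; rewrite /Lbound -modc_real -evZ_real ltr_pdivrMl ?exprn_gt0 //.
have -> : (i0 + (size Rp).-1)%N =
          (\sum_(i <- s) (i * (size (r i)).-1 + (i == i0) * i0))%N.
  rewrite big_split /= -size_Rp addnC (bigD1_seq i0) ?iota_uniq //=.
  by rewrite eqxx mul1n big1 ?addn0 // => i /negbTE ->.
rewrite !evZ_Rp !modc_prod -prodrXr -big_split /=.
apply: (ltr_prod_seq1 i0_s (iota_uniq _ _)) => [i i_s ne|].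
  by rewrite (negbTE ne) mul0n addn0; apply: factor_boundary_ratio.
by rewrite eqxx mul1n; apply: factor_i0_boundary_ratio.
Qed.

End SquareFreeFactorization.

Theorem theorem3 (R : realType) (f g : {poly {poly int}})
  (ry rx : nat -> {poly int}) (i0 j0 : nat) (alpha beta a b c d : R) :
  no_common_factor f g ->
  sqfree_factorization (res_y f g) ry ->
  sqfree_factorization (res_x f g) rx ->
  evZ (res_y f g) alpha = 0 ->
  (1 <= i0 <= (size (res_y f g)).-1)%N -> evZ (ry i0) alpha = 0 ->
  admissible_interval (res_y f g) ry i0 alpha a b ->
  evZ (res_x f g) beta = 0 ->
  (1 <= j0 <= (size (res_x f g)).-1)%N -> evZ (rx j0) beta = 0 ->
  admissible_interval (res_x f g) rx j0 beta c d ->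
  let mA := ((a + b) / 2)%:C%C in let rA := (2 * ((b - a) / 2))%:C%C in
  let mB := ((c + d) / 2)%:C%C in let rB := (2 * ((d - c) / 2))%:C%C in
  (forall z1 z2 : R[i], `|z1 - mA| < rA -> `|z2 - mB| < rB ->
      evXY f z1 z2 = 0 -> evXY g z1 z2 = 0 ->
      z1 = alpha%:C%C /\ z2 = beta%:C%C) /\
  (forall z1 : R[i], `|z1 - mA| = rA ->
      (Lbound (res_y f g) i0 a b)%:C%C < `|evZ (res_y f g) z1|) /\
  (forall z2 : R[i], `|z2 - mB| = rB ->
      (Lbound (res_x f g) j0 c d)%:C%C < `|evZ (res_x f g) z2|).
Proof.
move=> _ Ry_fact Rx_fact Ry_alpha i0_range ry_alpha adm_alpha.
move=> Rx_beta j0_range rx_beta adm_beta mA rA mB rB.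
have res_neq1 (p : {poly int}) (x : R) : evZ p x = 0 -> p <> 1.
  by move=> px0 p1; move: px0; rewrite p1 evZ1 => /eqP; rewrite oner_eq0.
split; [|split].
- move=> z1 z2; rewrite !normcE !ltcR => z1_near z2_near f0 g0; split.
    case: (res_y_common_zero f0 g0) => [|/(res_neq1 _ _ Ry_alpha)//].
    exact: sqfree_factorization_root_unique Ry_fact ry_alpha adm_alpha _ z1_near.
  case: (res_x_common_zero f0 g0) => [|/(res_neq1 _ _ Rx_beta)//].
  exact: sqfree_factorization_root_unique Rx_fact rx_beta adm_beta _ z2_near.
- move=> z1; rewrite !normcE ltcR => /complexI.
  exact: sqfree_factorization_boundary_bound Ry_fact i0_range ry_alpha adm_alpha z1.
- move=> z2; rewrite !normcE ltcR => /complexI.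
  exact: sqfree_factorization_boundary_bound Rx_fact j0_range rx_beta adm_beta z2.
Qed.
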